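(* Let $\Gamma$ be a totally ordered abelian group, written additively, and let $S=\Gamma_{\geq 0}$ be the submonoid of its nonnegative elements. Let $K$ be any field and let $D=K[x^S]$ be the semigroup algebra of $S$ over $K$. Then the reciprocal complement $R(D)$ is a valuation ring with value group $\Gamma$.
   Context: For an integral domain $D$ with fraction field $F$, the reciprocal complement $R(D)$ is the subring of $F$ generated by all elements $1/d$ with $d\in D\setminus\{0\}$; equivalently, the set of all finite sums $\sum_{i=1}^n 1/d_i$ with $d_i\in D\setminus\{0\}$, $n\ge 0$. *)

From HB Require Import structures.
From mathcomp Require Import all_boot all_order all_algebra.
From mathcomp Require Import finmap.
From mathcomp.multinomials Require Import monalg.
Set Implicit Arguments. Unset Strict Implicit. Unset Printing Implicit Defensive.
Import Order.TTheory GRing.Theory Num.Theory.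
Local Open Scope ring_scope.

HB.mixin Record Zmod_isTotOrdGroup G of Num.POrderedZmodule G := {
  le_total_tog : total (<=%O : rel G);
  lerD2r_tog : forall x y z : G, x <= y -> x + z <= y + z
}.

#[short(type="totOrdAbGroup")]
HB.structure Definition TotOrdAbGroup :=
  { G of Num.POrderedZmodule G & Zmod_isTotOrdGroup G }.

Section NonNeg.
Variable G : totOrdAbGroup.

Definition nnegG := {x : G | 0 <= x}.

HB.instance Definition _ := Choice.on nnegG.

Lemma nnegG0 : (0 : G) <= 0. Proof. by []. Qed.

Lemma nnegGD (x y : G) : 0 <= x -> 0 <= y -> 0 <= x + y.
Proof.
move=> hx hy; have := lerD2r_tog 0 x y hx; rewrite add0r => h.
exact: le_trans hy h.
Qed.

Definition nnegG_one : nnegG := exist _ 0 nnegG0.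
Definition nnegG_add (x y : nnegG) : nnegG :=
  exist _ (sval x + sval y) (nnegGD (svalP x) (svalP y)).

Lemma nnegG_addA : associative nnegG_add.
Proof. by move=> x y z; apply: val_inj; rewrite /= addrA. Qed.
Lemma nnegG_add0 : left_id nnegG_one nnegG_add.
Proof. by move=> x; apply: val_inj; rewrite /= add0r. Qed.
Lemma nnegG_addr0 : right_id nnegG_one nnegG_add.
Proof. by move=> x; apply: val_inj; rewrite /= addr0. Qed.
Lemma nnegG_addC : commutative nnegG_add.
Proof. by move=> x y; apply: val_inj; rewrite /= addrC. Qed.

Lemma nnegG_unit (x y : nnegG) :
  nnegG_add x y = nnegG_one -> x = nnegG_one /\ y = nnegG_one.
Proof.
case: x y => [x hx] [y hy] /(congr1 val) /= hxy.
have hyx : y = - x by apply/eqP; rewrite -subr_eq0 opprK addrC hxy.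
have hx' : x <= 0.
  have := lerD2r_tog 0 y (- y) hy; by rewrite subrr add0r hyx opprK.
have x0 : x = 0 by apply/eqP; rewrite eq_le hx' hx.
by split; apply: val_inj => //=; rewrite hyx x0 oppr0.
Qed.

HB.instance Definition _ := Choice_isMonomialDef.Build nnegG
  nnegG_addA nnegG_add0 nnegG_addr0 nnegG_unit.
HB.instance Definition _ := MonomialDef_isConomialDef.Build nnegG nnegG_addC.

End NonNeg.

Notation semigroup_algebra K G := {malg K[nnegG G]}.

Definition is_fraction_field (D : comRingType) (F : fieldType)
    (phi : {rmorphism D -> F}) : Prop :=
  injective phi /\ forall z : F, exists a b : D, b != 0 /\ z = phi a / phi b.

Definition recip_compl (D : comRingType) (F : fieldType) (phi : D -> F)
    (z : F) : Prop :=
  exists s : seq D, all (fun d => d != 0) s /\ z = \sum_(d <- s) (phi d)^-1.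

Definition is_valuation_ring (F : fieldType) (V : F -> Prop) : Prop :=
  forall z : F, z != 0 -> V z \/ V z^-1.

(* The value group F^x / V^x of V (ordered by divisibility) is order-isomorphic
   to G: equivalently there is a surjective group morphism v : F^x -> G with
   V \ {0} = {v >= 0}; such a v induces F^x/V^x ~= G as ordered groups. *)
Definition has_value_group (F : fieldType) (V : F -> Prop)
    (G : totOrdAbGroup) : Prop :=
  exists v : F -> G,
    [/\ forall x y : F, x != 0 -> y != 0 -> v (x * y) = v x + v y,
        forall g : G, exists x : F, x != 0 /\ v x = g
      & forall x : F, x != 0 -> (V x <-> 0 <= v x)].

From HB Require Import structures.
From mathcomp Require Import all_boot all_order all_algebra.
From mathcomp Require Import finmap.
From mathcomp.multinomials Require Import monalg.
From mathcomp Require Import ring.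
Import Order.TTheory GRing.Theory Num.Theory.
Local Open Scope ring_scope.
Set Implicit Arguments. Unset Strict Implicit. Unset Printing Implicit Defensive.

(* Every nonzero f in D = K[x^S] has a leading exponent deg f = max supp f,
   and deg (f g) = deg f + deg g because leading terms multiply without
   cancellation. The reciprocal complement is
     R(D) = { a/b : b <> 0, every exponent of a is <= deg b }.
   The right-hand side contains 0 and is stable under adding 1/d, which gives
   one inclusion. For the other it suffices to show x^t/g in R(D) for
   t <= deg g: write g = x^t q + r, where r collects the terms of g of exponent
   < t; then x^t/g = 1/q - (1/q)(r/g), and r/g is a K-combination of the x^s/g
   with s < t in supp g, so induction on the number of exponents of g below t
   applies. Hence a nonzero a/b lies in R(D) iff deg a <= deg b, i.e. R(D) is
   the valuation ring of v(a/b) = deg b - deg a, whose value group is Gamma. *)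

Section TotOrdAbGroupTheory.
Variable G : totOrdAbGroup.
Implicit Types x y z : G.

Lemma tog_lerD2r x y z : (x + z <= y + z) = (x <= y).
Proof.
apply/idP/idP; last exact: lerD2r_tog.
by move/(lerD2r_tog _ _ (- z)); rewrite !addrK.
Qed.

Lemma tog_lerD2l x y z : (z + x <= z + y) = (x <= y).
Proof. by rewrite ![z + _]addrC tog_lerD2r. Qed.

Lemma tog_ltNge x y : (x < y) = ~~ (y <= x).
Proof. exact: comparable_ltNge (le_total_tog x y). Qed.

Lemma tog_subr_ge0 x y : (0 <= y - x) = (x <= y).
Proof. by rewrite -(tog_lerD2r 0 _ x) add0r subrK. Qed.

Lemma tog_oppr_ge0 x : (0 <= - x) = (x <= 0).
Proof. by rewrite -sub0r tog_subr_ge0. Qed.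

Lemma tog_lerD x1 y1 x2 y2 : x1 <= y1 -> x2 <= y2 -> x1 + x2 <= y1 + y2.
Proof.
by move=> le1 le2; apply: le_trans (lerD2r_tog _ _ x2 le1) _; rewrite tog_lerD2l.
Qed.

End TotOrdAbGroupTheory.

Lemma value_group_valuation_ring (F : fieldType) (V : F -> Prop)
    (G : totOrdAbGroup) :
  has_value_group V G -> is_valuation_ring V.
Proof.
move=> [v [vM _ hV]] z z0.
have v1 : v 1 = 0.
  by apply: (addrI (v 1)); rewrite addr0 -vM ?mulr1 ?oner_neq0.
have vV : v z^-1 = - v z.
  by apply/eqP; rewrite -addr_eq0 -vM ?invr_eq0 ?mulVf ?v1.
have [vz_ge0 | vz_lt0] := boolP (0 <= v z); [left | right].
  exact/(hV _ z0).
by apply/(hV _ (invr_neq0 z0)); rewrite vV tog_oppr_ge0 ltW // tog_ltNge.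
Qed.

Lemma seq_argmax (disp : Order.disp_t) (T : porderType disp) (I : eqType)
    (f : I -> T) (l : seq I) (i0 : I) :
  total (<=%O : rel T) -> i0 \in l ->
  exists2 i, i \in l & all (fun j => (f j <= f i)%O) l.
Proof.
move=> le_tot; elim: l i0 => // j l IH i0 _.
case: l IH => [_ | k l IH]; first by exists j; rewrite ?mem_head //= lexx.
have [i il hi] := IH k (mem_head k l).
have [le_ji | le_ij] := orP (le_tot (f j) (f i)).
  by exists i; [rewrite inE il orbT | apply/andP; split].
exists j; first exact: mem_head.
apply/allP => m; rewrite inE => /predU1P[-> | ml]; first exact: lexx.
exact: le_trans (allP hi m ml) le_ij.
Qed.

Lemma sub_count_lt (T : eqType) (a1 a2 : pred T) (l : seq T) (x : T) :
  subpred a1 a2 -> x \in l -> a2 x -> ~~ a1 x -> (count a1 l < count a2 l)%N.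
Proof.
move=> a12; elim: l => //= y l IH; rewrite inE => /orP[/eqP <- | xl] a2x a1x.
  by rewrite a2x (negbTE a1x) add0n add1n ltnS sub_count.
have := IH xl a2x a1x; case a1y: (a1 y); first by rewrite (a12 _ a1y) !add1n.
by move=> lt_a12; rewrite add0n (leq_trans lt_a12) ?leq_addl.
Qed.

Section LeadingExponent.
Variables (G : totOrdAbGroup) (K : fieldType).
Local Notation D := (semigroup_algebra K G).
Local Notation M := (nnegG G).
Implicit Types (a b g : D) (s t : M).

Lemma nnegG_valM s t : val (mmul s t) = val s + val t.
Proof. by []. Qed.

Lemma nnegG_sub_onto (x : G) : exists s t : M, val t - val s = x.
Proof.
have [x_ge0 | x_lt0] := boolP (0 <= x).
  by exists mone, (exist _ x x_ge0); rewrite /= subr0.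
have Nx_ge0 : 0 <= - x by rewrite tog_oppr_ge0 ltW // tog_ltNge.
by exists (exist _ (- x) Nx_ge0), mone; rewrite /= sub0r opprK.
Qed.

Definition supp_le g (x : G) := forall s, s \in msupp g -> val s <= x.

Definition is_lead g s : bool :=
  (s \in msupp g) && all (fun s' : M => val s' <= val s) (msupp g).

Lemma lead_exists g : exists s, (g == 0) || is_lead g s.
Proof.
have [-> | g0] := eqVneq g 0; first by exists mone.
have /fset0Pn[s0 s0g] : msupp g != fset0 by rewrite msupp_eq0.
have [s sg hs] := seq_argmax val (@le_total_tog G) s0g.
by exists s; rewrite /is_lead sg hs orbT.
Qed.

(* Kept opaque (Qed) so that unification never unfolds the choice function
   behind deg, which is very slow; for g = 0 the value is junk. *)
Lemma lead_spec g : {s : M | (g == 0) || is_lead g s}.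
Proof. exact/sigW/lead_exists. Qed.

Definition lead g : M := sval (lead_spec g).
Definition deg g : G := val (lead g).

Lemma lead_is_lead g : g != 0 -> is_lead g (lead g).
Proof. by move=> g0; have /orP[|//] := svalP (lead_spec g); rewrite (negbTE g0). Qed.

Lemma lead_msupp g : g != 0 -> lead g \in msupp g.
Proof. by case/lead_is_lead/andP. Qed.

Lemma supp_le_deg g : supp_le g (deg g).
Proof.
have [-> s | g0] := eqVneq g 0; first by rewrite msupp0 inE.
by case/andP: (lead_is_lead g0) => _ /allP.
Qed.

Lemma lead_unique g s : is_lead g s -> lead g = s.
Proof.
case/andP=> sg hs; have g0 : g != 0.
  by apply: contraTneq sg => ->; rewrite msupp0 inE.
apply/val_inj/le_anti/andP; split; first exact: (allP hs _ (lead_msupp g0)).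
exact: supp_le_deg sg.
Qed.

Lemma deg_le g x : g != 0 -> supp_le g x -> deg g <= x.
Proof. by move=> g0; apply; apply: lead_msupp. Qed.

Lemma deg_ge0 g : 0 <= deg g.
Proof. exact: svalP (lead g). Qed.

Lemma supp_le_trans g x y : supp_le g x -> x <= y -> supp_le g y.
Proof. by move=> gx xy s /gx sx; apply: le_trans xy. Qed.

Lemma supp_le0 x : supp_le 0 x.
Proof. by move=> s; rewrite msupp0 inE. Qed.

Lemma supp_leD g1 g2 x : supp_le g1 x -> supp_le g2 x -> supp_le (g1 + g2) x.
Proof.
by move=> g1x g2x s /(fsubsetP (msuppD_le _ _)); rewrite inE => /orP[/g1x | /g2x].
Qed.

Lemma supp_leM g1 g2 x y :
  supp_le g1 x -> supp_le g2 y -> supp_le (g1 * g2) (x + y).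
Proof.
move=> g1x g2y s /msuppM_le[s1 [s2 [s1g s2g ->]]].
by rewrite nnegG_valM tog_lerD ?g1x ?g2y.
Qed.

Lemma mmul_eq_lead a b s1 s2 : s1 \in msupp a -> s2 \in msupp b ->
  mmul s1 s2 = mmul (lead a) (lead b) -> s1 = lead a /\ s2 = lead b.
Proof.
move=> s1a s2b /(congr1 val); rewrite !nnegG_valM => e.
have e1 : val s1 = deg a.
  apply/le_anti; rewrite (supp_le_deg s1a) /=.
  by rewrite -(tog_lerD2r _ _ (val s2)) e tog_lerD2l (supp_le_deg s2b).
have e2 : s1 = lead a by apply: val_inj.
by split=> //; apply/val_inj/(addrI (val s1)); rewrite e e2.
Qed.

Lemma mcoeffM_lead a b : a != 0 -> b != 0 ->
  (a * b)@_(mmul (lead a) (lead b)) = a@_(lead a) * b@_(lead b).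
Proof.
move=> a0 b0; rewrite mcoeffMl.
rewrite (bigD1_seq (lead a)) ?lead_msupp ?fset_uniq //=.
rewrite (bigD1_seq (lead b)) ?lead_msupp ?fset_uniq //= eqxx mulr1n.
rewrite big1_seq ?addr0 => [|s2 /andP[s2_neq s2b]]; last first.
  case: eqP => // /(mmul_eq_lead (lead_msupp a0) s2b)[_ s2E].
  by rewrite s2E eqxx in s2_neq.
rewrite big1_seq ?addr0 // => s1 /andP[s1_neq s1a].
rewrite big1_seq // => s2 /andP[_ s2b].
case: eqP => // /(mmul_eq_lead s1a s2b)[s1E _].
by rewrite s1E eqxx in s1_neq.
Qed.

Lemma lead_coef_neq0 a : a != 0 -> a@_(lead a) != 0.
Proof. by move=> a0; rewrite mcoeff_neq0 lead_msupp. Qed.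

Lemma lead_mul a b : a != 0 -> b != 0 -> lead (a * b) = mmul (lead a) (lead b).
Proof.
move=> a0 b0; apply: lead_unique; apply/andP; split.
  by rewrite -mcoeff_neq0 mcoeffM_lead // mulf_neq0 ?lead_coef_neq0.
apply/allP => s /(supp_leM (supp_le_deg (g := a)) (supp_le_deg (g := b))).
by rewrite nnegG_valM.
Qed.

Lemma degM a b : a != 0 -> b != 0 -> deg (a * b) = deg a + deg b.
Proof. by move=> a0 b0; rewrite /deg lead_mul. Qed.

Lemma degU t : deg << t >> = val t.
Proof.
rewrite /deg (@lead_unique _ t) // /is_lead msuppU1 inE eqxx /=.
by apply/allP => s; rewrite inE => /eqP ->.
Qed.

End LeadingExponent.

Lemma divf_decomp (F : fieldType) (u q r g : F) :
  g = u * q + r -> q != 0 -> g != 0 -> u / g = q^-1 - q^-1 * (r / g).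
Proof.
move=> gE q0 g0; have -> : r = g - u * q by rewrite gE; ring.
by field; apply/andP.
Qed.

Section ReciprocalComplement.
Variables (D : comNzRingType) (F : fieldType) (phi : {rmorphism D -> F}).
Hypothesis phi_inj : injective phi.
Local Notation R := (recip_compl phi).
Implicit Types (a b d e : D) (x y : F).

Lemma rmorph_inj_neq0 d : d != 0 -> phi d != 0.
Proof. by apply: contra_neq => phid0; apply: phi_inj; rewrite phid0 rmorph0. Qed.

Lemma inj_mulr_neq0 a b : a != 0 -> b != 0 -> a * b != 0.
Proof.
move=> a0 b0; apply: contraTneq (mulf_neq0 (rmorph_inj_neq0 a0) (rmorph_inj_neq0 b0)).
by rewrite -rmorphM => ->; rewrite rmorph0 eqxx.
Qed.

Lemma recip_compl0 : R 0.
Proof. by exists [::]; rewrite big_nil. Qed.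

Lemma recip_complV d : d != 0 -> R (phi d)^-1.
Proof. by move=> d0; exists [:: d]; rewrite /= d0 big_seq1. Qed.

Lemma recip_complD x y : R x -> R y -> R (x + y).
Proof.
move=> [l1 [l1_neq0 ->]] [l2 [l2_neq0 ->]]; exists (l1 ++ l2).
by rewrite all_cat l1_neq0 l2_neq0 big_cat.
Qed.

Lemma recip_complN x : R x -> R (- x).
Proof.
move=> [l [l_neq0 ->]]; exists (map -%R l); split.
  by rewrite all_map; apply: sub_all l_neq0 => d /=; rewrite oppr_eq0.
by rewrite big_map -sumrN; apply: eq_bigr => d _; rewrite rmorphN invrN.
Qed.

Lemma recip_complVM d x : d != 0 -> R x -> R ((phi d)^-1 * x).
Proof.
move=> d0 [l [l_neq0 ->]]; exists (map ( *%R d) l); split.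
  by rewrite all_map; apply/allP => e el; exact: inj_mulr_neq0 d0 (allP l_neq0 e el).
by rewrite big_map big_distrr; apply: eq_bigr => e _; rewrite rmorphM invfM.
Qed.

Lemma recip_complM x y : R x -> R y -> R (x * y).
Proof.
move=> [l [l_neq0 ->]] Ry; elim: l l_neq0 => [_ | d l IH /andP[d0 l_neq0]].
  by rewrite big_nil mul0r; exact: recip_compl0.
by rewrite big_cons mulrDl; apply: recip_complD (recip_complVM d0 Ry) (IH l_neq0).
Qed.

Lemma recip_compl_sum (I : eqType) (r : seq I) (P : pred I) (f : I -> F) :
  (forall i, i \in r -> P i -> R (f i)) -> R (\sum_(i <- r | P i) f i).
Proof.
move=> Rf; rewrite big_seq_cond; apply: big_ind => //.
- exact: recip_compl0.
- exact: recip_complD.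
- by move=> i /andP[]; apply: Rf.
Qed.

Lemma recip_compl_unit d e : d * e = 1 -> R (phi d).
Proof.
move=> de1; have e0 : e != 0.
  by apply: contra_neq (oner_neq0 D) => e0; rewrite -de1 e0 mulr0.
have <- : (phi e)^-1 = phi d.
  by apply: mulr1_eq; rewrite -rmorphM mulrC de1 rmorph1.
exact: recip_complV.
Qed.

End ReciprocalComplement.

Section MonomialFractions.
Variables (G : totOrdAbGroup) (K : fieldType) (F : fieldType).
Variable phi : {rmorphism semigroup_algebra K G -> F}.
Hypothesis phi_inj : injective phi.
Local Notation D := (semigroup_algebra K G).
Local Notation M := (nnegG G).
Local Notation R := (recip_compl phi).
Implicit Types (a b g : D) (s t : M).

Lemma recip_complC c : R (phi c%:MP).
Proof.
have [-> | c0] := eqVneq c 0; first by rewrite malgC0E rmorph0; exact: recip_compl0.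
by apply: (@recip_compl_unit _ _ phi _ c^-1%:MP); rewrite -mpolyCM mulfV ?mpolyC1E.
Qed.

Lemma monalgUC c t : << c *g t >> = c%:MP * << t >> :> D.
Proof. by rewrite malgM_def fgmulUU mulr1 mul1m. Qed.

Lemma monalgUM t c u : << t >> * << c *g u >> = << c *g mmul t u >> :> D.
Proof. by rewrite malgM_def fgmulUU mul1r. Qed.

Definition mono_sub s t : M := insubd (mone : M) (val s - val t).

Lemma mono_subK s t : val t <= val s -> mmul t (mono_sub s t) = s.
Proof.
move=> ts; apply: val_inj.
by rewrite nnegG_valM val_insubd tog_subr_ge0 ts addrC subrK.
Qed.

Lemma monalg_split g t :
  g = << t >> * \sum_(s <- msupp g | val t <= val s) << g@_s *g mono_sub s t >>
      + \sum_(s <- msupp g | val s < val t) << g@_s *g s >>.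
Proof.
rewrite {1}[g]monalgE (bigID (fun s : M => val t <= val s)) /=; congr (_ + _).
  by rewrite mulr_sumr; apply: eq_bigr => s ts; rewrite monalgUM mono_subK.
by apply: eq_bigl => s; rewrite tog_ltNge.
Qed.

Lemma recip_compl_term c s b :
  R (phi << s >> / phi b) -> R (phi << c *g s >> / phi b).
Proof.
move=> Rs; rewrite monalgUC rmorphM -mulrA.
by apply: (recip_complM phi_inj) Rs; apply: recip_complC.
Qed.

Lemma recip_compl_monomial_frac g t :
  g != 0 -> val t <= deg g -> R (phi << t >> / phi g).
Proof.
move=> g0; pose below t := count (fun s : M => val s < val t) (msupp g).
suff: forall n t, (below t < n)%N -> val t <= deg g -> R (phi << t >> / phi g).
  by move=> Rn; apply: Rn (ltnSn _).
elim=> // n IH {}t below_t tg; move: (monalg_split g t).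
set q := \sum_(s <- msupp g | val t <= val s) _.
set r := \sum_(s <- msupp g | val s < val t) _ => gE.
have r_lead : r@_(lead g) = 0.
  rewrite /r raddf_sum big1_seq // => s /andP[st _] /=; rewrite mcoeffU.
  by case: eqP => // sE; rewrite sE tog_ltNge tg in st.
have Rr : R (phi r / phi g).
  rewrite rmorph_sum mulr_suml; apply: recip_compl_sum => s sg st.
  apply: recip_compl_term; apply: IH; last exact: supp_le_deg sg.
  apply: leq_trans (_ : below s < below t)%N _; last by rewrite -ltnS.
  apply: (sub_count_lt _ sg st); last by rewrite ltxx.
  by move=> u us; apply: lt_trans us st.
clearbody q r.
have q0 : q != 0.
  apply: contra_neq (lead_coef_neq0 g0) => q0.
  by move: (congr1 (mcoeff (lead g)) gE); rewrite q0 mulr0 add0r r_lead.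
have phigE : phi g = phi << t >> * phi q + phi r by rewrite -rmorphM -rmorphD -gE.
rewrite (divf_decomp phigE) ?(rmorph_inj_neq0 phi_inj) //.
apply: recip_complD; first exact: recip_complV.
apply: recip_complN; apply: (recip_complM phi_inj) Rr; exact: recip_complV.
Qed.

Lemma recip_compl_frac a b : b != 0 -> supp_le a (deg b) -> R (phi a / phi b).
Proof.
move=> b0 ab; rewrite {1}[a]monalgE rmorph_sum mulr_suml.
apply: recip_compl_sum => s sa _; apply: recip_compl_term.
exact: recip_compl_monomial_frac (ab _ sa).
Qed.

Lemma recip_compl_fracP z :
  R z -> exists a b, [/\ b != 0, supp_le a (deg b) & z = phi a / phi b].
Proof.
case=> l [+ ->]; elim: l => [_ | d l IH /andP[d0 /IH[a [b [b0 ab sumE]]]]].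
  exists 0, 1; split; rewrite ?oner_neq0 ?big_nil ?rmorph0 ?mul0r //.
  exact: supp_le0.
rewrite big_cons sumE; exists (b + a * d), (d * b); split.
- exact: (inj_mulr_neq0 phi_inj).
- rewrite degM //; apply: supp_leD.
    apply: supp_le_trans (supp_le_deg (g := b)) _.
    by rewrite -{1}(add0r (deg b)) tog_lerD2r deg_ge0.
  by rewrite addrC; apply: supp_leM ab (supp_le_deg (g := d)).
- rewrite -[(phi d)^-1]mul1r addf_div ?(rmorph_inj_neq0 phi_inj) //.
  by rewrite mul1r -!rmorphM -rmorphD.
Qed.

End MonomialFractions.

Section ValueGroup.
Variables (G : totOrdAbGroup) (K : fieldType) (F : fieldType).
Variable phi : {rmorphism semigroup_algebra K G -> F}.
Hypothesis phi_frac : is_fraction_field phi.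
Local Notation D := (semigroup_algebra K G).
Local Notation R := (recip_compl phi).
Implicit Types (a b c d : D) (x y z : F).

Let phi_inj : injective phi := phi_frac.1.

Lemma frac_exists z : exists ab : D * D, (ab.2 != 0) && (z == phi ab.1 / phi ab.2).
Proof. by have [a [b [b0 ->]]] := phi_frac.2 z; exists (a, b); rewrite b0 eqxx. Qed.

Definition frac z : D * D := xchoose (frac_exists z).

Definition valuation z : G := deg (frac z).2 - deg (frac z).1.

Lemma frac_neq0 z : z != 0 -> exists a b, [/\ a != 0, b != 0 & z = phi a / phi b].
Proof.
move=> z0; have [a [b [b0 zE]]] := phi_frac.2 z; exists a, b; split=> //.
by apply: contraNneq z0 => a0; rewrite zE a0 rmorph0 mul0r.
Qed.

Lemma deg_frac_eq a b c d : a != 0 -> b != 0 -> c != 0 -> d != 0 ->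
  phi a / phi b = phi c / phi d -> deg b - deg a = deg d - deg c.
Proof.
move=> a0 b0 c0 d0 /eqP; rewrite eqr_div ?(rmorph_inj_neq0 phi_inj) //.
rewrite -!rmorphM => /eqP/phi_inj ad_cb.
have e : deg a + deg d = deg c + deg b.
  by rewrite -(degM a0 d0) -(degM c0 b0) ad_cb.
by apply/eqP; rewrite subr_eq addrAC [deg d + _]addrC e addrAC subrr add0r.
Qed.

Lemma valuationE z a b :
  a != 0 -> b != 0 -> z = phi a / phi b -> valuation z = deg b - deg a.
Proof.
move=> a0 b0 zE; have z0 : z != 0.
  by rewrite zE mulf_neq0 ?invr_neq0 ?(rmorph_inj_neq0 phi_inj).
rewrite /valuation; have := xchooseP (frac_exists z); rewrite -/(frac z).
case: (frac z) => c d /= /andP[d0 /eqP zE'].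
have c0 : c != 0 by apply: contraNneq z0 => c0; rewrite zE' c0 rmorph0 mul0r.
by apply: deg_frac_eq; rewrite // -zE -zE'.
Qed.

Lemma valuationM x y :
  x != 0 -> y != 0 -> valuation (x * y) = valuation x + valuation y.
Proof.
move=> /frac_neq0[a [b [a0 b0 ->]]] /frac_neq0[c [d [c0 d0 ->]]].
have ac0 : a * c != 0 by exact: (inj_mulr_neq0 phi_inj).
have bd0 : b * d != 0 by exact: (inj_mulr_neq0 phi_inj).
rewrite (valuationE a0 b0 erefl) (valuationE c0 d0 erefl) (valuationE ac0 bd0).
  by rewrite addrACA -opprD -(degM b0 d0) -(degM a0 c0).
by rewrite mulrACA -invfM -!rmorphM.
Qed.

Lemma valuation_onto g : exists x, x != 0 /\ valuation x = g.
Proof.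
have [s [t <-]] := nnegG_sub_onto g.
have U0 u : (<< u >> : D) != 0 by rewrite monalgU_eq0 oner_neq0.
exists (phi << s >> / phi << t >>); split.
  by rewrite mulf_neq0 ?invr_neq0 ?(rmorph_inj_neq0 phi_inj).
by rewrite (valuationE (U0 s) (U0 t) erefl) !degU.
Qed.

Lemma recip_compl_valuation x : x != 0 -> R x <-> 0 <= valuation x.
Proof.
move=> x0; split.
  case/(recip_compl_fracP phi_inj) => [a [b [b0 ab xE]]].
  have a0 : a != 0 by apply: contraNneq x0 => a0; rewrite xE a0 rmorph0 mul0r.
  by rewrite (valuationE a0 b0 xE) tog_subr_ge0 deg_le.
have [a [b [a0 b0 xE]]] := frac_neq0 x0.
rewrite (valuationE a0 b0 xE) tog_subr_ge0 xE => ab.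
apply: (recip_compl_frac phi_inj b0).
exact: supp_le_trans (supp_le_deg (g := a)) ab.
Qed.

Lemma recip_compl_value_group : has_value_group R G.
Proof.
exists valuation; split.
- exact: valuationM.
- exact: valuation_onto.
- exact: recip_compl_valuation.
Qed.

End ValueGroup.

Unset Implicit Arguments.

Theorem mainTheorem1 (G : totOrdAbGroup) (K : fieldType) (F : fieldType)
    (phi : {rmorphism semigroup_algebra K G -> F}) :
  is_fraction_field phi ->
  is_valuation_ring (recip_compl phi) /\ has_value_group (recip_compl phi) G.
Proof.
move=> phi_frac; have value_group := recip_compl_value_group phi_frac.
by split; [exact: value_group_valuation_ring value_group | exact: value_group].
Qed.
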